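(* Consider the continuous Bomber Problem described in the context, with parameter $v\in(0,1]$. Let $x=x_t>0$ be defined for small $t>0$ and satisfy $$\frac{|\log t|}{x_t}\to\rho\in(0,\infty)\quad\text{as } t\to 0.$$ Let $j\in\{1,2,\ldots\}$ be such that $$\binom{j+1}{2}^{-1}\le\rho<\binom{j}{2}^{-1},$$ with the convention $\binom{1}{2}^{-1}=\infty$. Then, as $t\to 0$, $$\frac{K(x_t,t)}{x_t}\to \frac1j+\frac{\rho(j-1)}{2},\qquad \frac{1}{x_t}\left|\log\big(1-H(x_t,t)\big)\right|\to \frac1j+\frac{\rho(j-1)}{2},$$ $$\frac{1}{x_t}\left|\log\big(1-P(x_t,t)\big)\right|\to \frac1j+\frac{\rho(j+1)}{2}.$$
   Context: The Bomber Problem: a bomber holding an amount $x\ge 0$ of (continuously divisible) ammunition must survive for a remaining time $t\ge 0$. Enemies arrive according to a time-homogeneous Poisson process of rate 1. Upon meeting an enemy, the bomber chooses an amount $y\in[0,x]$ of its current ammunition to fire; the enemy survives this with probability $e^{-y}$, and if it survives it destroys the bomber with probability $v\in(0,1]$. Thus the bomber survives an encounter in which it spends $y$ with probability $a(y)=1-ve^{-y}$, and continues with ammunition $x-y$. $P(x,t)$ denotes the optimal probability that the bomber survives for time $t$ starting with ammunition $x$; $H(x,t)$ denotes the optimal conditional probability of survival given that an enemy is encountered at remaining time $t$ while holding ammunition $x$; and $K(x,t)\in[0,x]$ denotes the optimal amount of ammunition to fire at that enemy, so that $H(x,t)=a(K(x,t))P(x-K(x,t),t)$. *)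

From Stdlib Require Import Reals.
From Coquelicot Require Import Coquelicot.
Open Scope R_scope.

(* Probability of surviving an encounter in which amount y is fired. *)
Definition a (v y : R) : R := 1 - v * exp (- y).

Definition Hfun (v : R) (P K : R -> R -> R) (x t : R) : R :=
  a v (K x t) * P (x - K x t) t.

(* (P, K) is the solution of the continuous Bomber Problem with parameter v:
   - P takes values in [0,1] on the domain x >= 0, t >= 0;
   - K(x,t) in [0,x] is an optimal amount to fire at an enemy met at remaining
     time t holding ammunition x:  H(x,t) = max_{0<=y<=x} a(y) P(x-y,t);
   - P satisfies the dynamic-programming (optimality) equation for Poisson(1)
     enemy arrivals: conditioning on the time s of the first arrival,
       P(x,t) = e^{-t} + int_0^t e^{-s} H(x, t-s) ds.
   Among bounded functions this equation has a unique solution P, which is the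
   optimal survival probability. *)
Definition bomber_solution (v : R) (P K : R -> R -> R) : Prop :=
  (forall x t, 0 <= x -> 0 <= t -> 0 <= P x t <= 1) /\
  (forall x t, 0 <= x -> 0 <= t ->
     0 <= K x t <= x /\
     (forall y, 0 <= y <= x -> a v y * P (x - y) t <= Hfun v P K x t)) /\
  (forall x t, 0 <= x -> 0 <= t ->
     ex_RInt (fun s => exp (- s) * Hfun v P K x (t - s)) 0 t /\
     P x t = exp (- t) + RInt (fun s => exp (- s) * Hfun v P K x (t - s)) 0 t).

From Stdlib Require Import Reals Lra Lia.
From Coquelicot Require Import Coquelicot.
Open Scope R_scope.

(* With Q = 1 - P, G = 1 - H and L = - ln t, the dynamic-programming equation gives, by
   induction on k and for small t, a lower bound on Q(z,t) by a constant times
   exp (- (z / k + (k + 1) / 2 L)) ([volley_exponent z L k]) for every k >= 1, and an upper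
   bound by a constant times exp (- T) + t ^ (n + 1) whenever T <= volley_exponent z L k for
   all k <= n.  The same bounds hold for G with the exponents lowered by L, since
   G(z,t) <= v e^(-y) + Q(z - y, t) for every amount y fired and G(z,t) >= a(K) Q(z - K, t).
   Hence - ln Q(x,t) is x min_k (1/k + (k+1)/2 L/x) up to o(x), and when L/x -> rho the minimum
   is attained at the j of the bracket.  Finally v e^(-K) <= G bounds K from below by - ln G,
   while a(K) Q(x - K, t) <= G and the lower bound on Q for j - 1 volleys bound K from above. *)

Lemma exp_le_exp x y : x <= y -> exp x <= exp y.
Proof.
  intros Hxy. destruct (Rle_lt_or_eq_dec _ _ Hxy) as [Hlt | ->];
    [left; now apply exp_increasing | now right].
Qed.

Lemma exp_le_inv x y : exp x <= exp y -> x <= y.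
Proof.
  intros Hxy. destruct (Rle_or_lt x y) as [|Hlt]; [easy|]. apply exp_increasing in Hlt; lra.
Qed.

Lemma ln_le_of_le_exp q b : 0 < q -> q <= exp b -> ln q <= b.
Proof. intros Hq Hqb. apply exp_le_inv. now rewrite exp_ln. Qed.

Lemma le_ln_of_exp_le q b : exp b <= q -> b <= ln q.
Proof. intros Hbq. apply exp_le_inv. rewrite exp_ln; [easy|]. pose proof (exp_pos b); lra. Qed.

Lemma neg_ln_between q c1 c2 T1 T2 : 0 < c1 -> 0 < c2 ->
  c1 * exp (- T2) <= q <= c2 * exp (- T1) -> T1 - ln c2 <= - ln q <= T2 - ln c1.
Proof.
  intros Hc1 Hc2 [Hlo Hhi].
  assert (Hq : 0 < q) by (pose proof (exp_pos (- T2)); nra).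
  split.
  - enough (ln q <= ln c2 - T1) by lra.
    apply ln_le_of_le_exp; [easy|]. unfold Rminus. now rewrite exp_plus, exp_ln.
  - enough (ln c1 - T2 <= ln q) by lra.
    apply le_ln_of_exp_le. unfold Rminus. now rewrite exp_plus, exp_ln.
Qed.

Lemma abs_ln_of_le_1 q : 0 < q <= 1 -> Rabs (ln q) = - ln q.
Proof.
  intros Hq. apply Rabs_left1. rewrite <- ln_1. now apply ln_le.
Qed.

Lemma neg_ln_pos w : 0 < w < 1 -> 0 < - ln w.
Proof. intros Hw. enough (ln w < 0) by lra. rewrite <- ln_1. apply ln_increasing; lra. Qed.

Lemma pow_le_exp_opp t T k : 0 < t -> T <= INR k * - ln t -> t ^ k <= exp (- T).
Proof.
  intros Ht HT. rewrite <- Rpower_pow by easy. unfold Rpower.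
  apply exp_le_exp. replace (INR k * - ln t) with (- (INR k * ln t)) in HT by ring. lra.
Qed.

Lemma is_RInt_exp_opp w : is_RInt (fun s => exp (- s)) 0 w (1 - exp (- w)).
Proof.
  replace (1 - exp (- w)) with (minus (- exp (- w)) (- exp (- 0)))
    by (rewrite Ropp_0, exp_0; unfold minus, plus, opp; simpl; ring).
  apply (is_RInt_derive (fun s => - exp (- s))).
  - intros s _. auto_derive; [easy | ring].
  - intros s _. apply (ex_derive_continuous (fun s => exp (- s))). auto_derive. easy.
Qed.

Lemma RInt_le_mul_const f w B : 0 <= w -> ex_RInt f 0 w ->
  (forall s, 0 <= s <= w -> f s <= B) -> RInt f 0 w <= w * B.
Proof.
  intros Hw Hf HB.
  assert (Hle : RInt f 0 w <= RInt (fun _ => B) 0 w)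
    by (apply RInt_le; auto; [apply ex_RInt_const | intros; apply HB; lra]).
  rewrite RInt_const, Rminus_0_r in Hle. exact Hle.
Qed.

Lemma RInt_ge_half_mul f w B : 0 < w -> ex_RInt f 0 w ->
  (forall s, 0 <= s <= w -> 0 <= f s) -> (forall s, 0 <= s <= w / 2 -> B <= f s) ->
  w / 2 * B <= RInt f 0 w.
Proof.
  intros Hw Hf Hpos HB.
  assert (Hf1 : ex_RInt f 0 (w / 2)) by (apply (ex_RInt_Chasles_1 f 0 (w / 2) w); auto; lra).
  assert (Hf2 : ex_RInt f (w / 2) w) by (apply (ex_RInt_Chasles_2 f 0 (w / 2) w); auto; lra).
  rewrite <- (RInt_Chasles f 0 (w / 2) w Hf1 Hf2).
  assert (Hfirst : RInt (fun _ => B) 0 (w / 2) <= RInt f 0 (w / 2))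
    by (apply RInt_le; auto; [lra | apply ex_RInt_const | intros; apply HB; lra]).
  rewrite RInt_const, Rminus_0_r in Hfirst.
  assert (Hsecond : 0 <= RInt f (w / 2) w)
    by (apply RInt_ge_0; auto; [lra | intros; apply Hpos; lra]).
  change (w / 2 * B <= RInt f 0 (w / 2) + RInt f (w / 2) w).
  change (w / 2 * B <= RInt f 0 (w / 2)) in Hfirst. lra.
Qed.

Section Limits.
Context {T : Type} {F : (T -> Prop) -> Prop} {FF : Filter F}.

Lemma lim_plus (f g : T -> R) lf lg : filterlim f F (locally lf) -> filterlim g F (locally lg) ->
  filterlim (fun t => f t + g t) F (locally (lf + lg)).
Proof. intros Hf Hg. exact (filterlim_comp_2 f g Rplus Hf Hg (filterlim_plus lf lg)). Qed.

Lemma lim_scal a (f : T -> R) l : filterlim f F (locally l) ->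
  filterlim (fun t => a * f t) F (locally (a * l)).
Proof.
  intros Hf. exact (filterlim_comp _ _ _ f (Rmult a) _ _ _ Hf (filterlim_Rbar_mult_l a l)).
Qed.

Lemma lim_inv_p_infty (x : T -> R) : filterlim x F (Rbar_locally p_infty) ->
  filterlim (fun t => / x t) F (locally 0).
Proof.
  intros Hx. exact (filterlim_comp _ _ _ x Rinv _ _ _ Hx (filterlim_Rbar_inv p_infty ltac:(easy))).
Qed.

Lemma lim_eventually_gt (u : T -> R) l b : filterlim u F (locally l) -> b < l ->
  F (fun t => b < u t).
Proof.
  intros Hu Hb. assert (Heps : 0 < l - b) by lra.
  apply filterlim_locally with (eps := mkposreal _ Heps) in Hu.
  eapply filter_imp; [| exact Hu]. intros t Hball.
  apply Rabs_lt_between' in Hball. simpl in Hball. lra.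
Qed.

Lemma lim_eventually_lt (u : T -> R) l b : filterlim u F (locally l) -> l < b ->
  F (fun t => u t < b).
Proof.
  intros Hu Hb. assert (Heps : 0 < b - l) by lra.
  apply filterlim_locally with (eps := mkposreal _ Heps) in Hu.
  eapply filter_imp; [| exact Hu]. intros t Hball.
  apply Rabs_lt_between' in Hball. simpl in Hball. lra.
Qed.

Lemma eventually_pos_of_p_infty (x : T -> R) : filterlim x F (Rbar_locally p_infty) ->
  F (fun t => 0 < x t).
Proof. intros Hx. apply Hx. now exists 0. Qed.

Lemma ratio_squeeze (g x u1 u2 : T -> R) c1 c2 l : filterlim x F (Rbar_locally p_infty) ->
  filterlim u1 F (locally l) -> filterlim u2 F (locally l) ->
  F (fun t => x t * u1 t - c1 <= g t <= x t * u2 t + c2) ->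
  filterlim (fun t => g t / x t) F (locally l).
Proof.
  intros Hx Hu1 Hu2 Hg.
  assert (Hinv := lim_inv_p_infty x Hx).
  apply (filterlim_le_le (fun t => u1 t + - c1 * / x t) (fun t => g t / x t)
           (fun t => u2 t + c2 * / x t) (Finite l)).
  - eapply filter_imp; [| exact (filter_and _ _ (eventually_pos_of_p_infty x Hx) Hg)].
    intros t [Hxt Hgt]. cbv beta. split.
    + enough (0 <= g t / x t - (u1 t + - c1 * / x t)) by lra.
      replace (g t / x t - (u1 t + - c1 * / x t)) with ((g t - (x t * u1 t - c1)) / x t)
        by (field; lra).
      apply Rdiv_le_0_compat; lra.
    + enough (0 <= u2 t + c2 * / x t - g t / x t) by lra.
      replace (u2 t + c2 * / x t - g t / x t) with ((x t * u2 t + c2 - g t) / x t)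
        by (field; lra).
      apply Rdiv_le_0_compat; lra.
  - replace (Finite l) with (Finite (l + - c1 * 0)) by (f_equal; ring).
    apply lim_plus; [easy | now apply lim_scal].
  - replace (Finite l) with (Finite (l + c2 * 0)) by (f_equal; ring).
    apply lim_plus; [easy | now apply lim_scal].
Qed.

Lemma eventually_ge_of_ratio (g x : T -> R) l c : filterlim x F (Rbar_locally p_infty) ->
  filterlim (fun t => g t / x t) F (locally l) -> 0 < l -> F (fun t => c <= g t).
Proof.
  intros Hx Hg Hl.
  assert (Hbig : F (fun t => Rmax 0 (2 * c / l) < x t))
    by (apply Hx; now exists (Rmax 0 (2 * c / l))).
  eapply filter_imp; [| exact (filter_and _ _ Hbig (lim_eventually_gt _ _ (l / 2) Hg ltac:(lra)))].
  intros t [Hxt Hgt].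
  pose proof (Rmax_l 0 (2 * c / l)). pose proof (Rmax_r 0 (2 * c / l)).
  replace (g t) with (x t * (g t / x t)) by (field; lra).
  assert (c <= x t * (l / 2)).
  { replace c with (2 * c / l * (l / 2)) by (field; lra). apply Rmult_le_compat_r; lra. }
  assert (x t * (l / 2) <= x t * (g t / x t)) by (apply Rmult_le_compat_l; lra).
  lra.
Qed.

Lemma p_infty_of_ratio (L x : T -> R) rho : filterlim L F (Rbar_locally p_infty) ->
  filterlim (fun t => L t / x t) F (locally rho) -> 0 < rho -> F (fun t => 0 < x t) ->
  filterlim x F (Rbar_locally p_infty).
Proof.
  intros HL Hr Hrho Hpos P [M HM]. unfold filtermap.
  assert (HLbig : F (fun t => 2 * rho * Rmax M 0 < L t))
    by (apply HL; now exists (2 * rho * Rmax M 0)).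
  assert (Hrsmall := lim_eventually_lt _ _ (2 * rho) Hr ltac:(lra)).
  eapply filter_imp; [| exact (filter_and _ _ Hpos (filter_and _ _ HLbig Hrsmall))].
  intros t [Hxt [HLt Hrt]]. apply HM.
  assert (L t < 2 * rho * x t).
  { replace (L t) with (L t / x t * x t) by (field; lra). apply Rmult_lt_compat_r; lra. }
  pose proof (Rmax_l M 0). nra.
Qed.

Lemma lim_abs_0 (e : T -> R) :
  filterlim e F (locally 0) -> filterlim (fun t => Rabs (e t)) F (locally 0).
Proof.
  intros He. rewrite <- Rabs_R0. exact (filterlim_comp _ _ _ e Rabs _ _ _ He (filterlim_Rabs 0)).
Qed.

End Limits.

Lemma at_right_0_lt b : 0 < b -> at_right 0 (fun t => 0 < t < b).
Proof.
  intros Hb. exists (mkposreal b Hb). intros t Hball Ht. split; [easy|].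
  apply Rabs_lt_between' in Hball. simpl in Hball. lra.
Qed.

Lemma lim_neg_ln_0 : filterlim (fun t => - ln t) (at_right 0) (Rbar_locally p_infty).
Proof. exact (filterlim_comp _ _ _ ln Ropp _ _ _ is_lim_ln_0 (filterlim_Rbar_opp m_infty)). Qed.

Lemma a_bounds v y : 0 < v <= 1 -> 0 <= y -> 0 <= a v y <= 1.
Proof.
  intros Hv Hy. unfold a.
  assert (exp (- y) <= 1) by (rewrite <- exp_0; apply exp_le_exp; lra).
  pose proof (exp_pos (- y)). split; nra.
Qed.

Lemma a_ge_half v y w : 0 < v <= 1 -> 0 < w <= / 4 -> - ln w / 2 <= y -> / 2 <= a v y.
Proof.
  intros Hv Hw Hy. unfold a.
  set (s := exp (ln w / 2)).
  assert (Hs2 : s * s = w).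
  { unfold s. rewrite <- exp_plus. replace (ln w / 2 + ln w / 2) with (ln w) by field.
    apply exp_ln; lra. }
  assert (Hs : 0 < s) by apply exp_pos.
  assert (exp (- y) <= s) by (apply exp_le_exp; lra).
  pose proof (exp_pos (- y)). nra.
Qed.

Definition volley_exponent (z L : R) (k : nat) : R := z / INR k + (INR k + 1) / 2 * L.

Lemma INR_ge_1 k : (1 <= k)%nat -> 1 <= INR k.
Proof. intros Hk. apply (le_INR 1); lia. Qed.

Lemma exists_nat_mul_ge a b : 0 < b -> exists n, a <= INR n * b.
Proof.
  intros Hb. destruct (INR_unbounded (a / b)) as [n Hn]. exists n.
  replace a with (a / b * b) by (field; lra). apply Rmult_le_compat_r; lra.
Qed.

Lemma volley_exponent_scale x L k : x <> 0 ->
  volley_exponent x L k = x * volley_exponent 1 (L / x) k.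
Proof.
  intros Hx. unfold volley_exponent. replace L with (x * (L / x)) at 1 by (field; exact Hx).
  unfold Rdiv. ring.
Qed.

Lemma volley_exponent_after_firing z y L m : (1 <= m)%nat ->
  volley_exponent (z - y) L m
  = volley_exponent z L (S m) - L + (volley_exponent z L (S m) - L - y) / INR m.
Proof.
  intros Hm. pose proof (INR_ge_1 m Hm). unfold volley_exponent. rewrite S_INR. field. lra.
Qed.

Lemma volley_exponent_sub_le z L1 L2 m : (1 <= m)%nat -> L1 <= L2 ->
  volley_exponent z L1 m - L1 <= volley_exponent z L2 m - L2.
Proof.
  intros Hm HL. pose proof (INR_ge_1 m Hm). unfold volley_exponent.
  assert (0 <= (INR m - 1) / 2 * (L2 - L1)) by (apply Rmult_le_pos; lra). nra.
Qed.

Lemma volley_exponent_le_L z L1 L2 k : L1 <= L2 ->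
  volley_exponent z L1 k <= volley_exponent z L2 k.
Proof.
  intros HL. unfold volley_exponent. pose proof (pos_INR k).
  assert (0 <= (INR k + 1) / 2 * (L2 - L1)) by (apply Rmult_le_pos; lra). nra.
Qed.

Lemma L_le_volley_exponent z L k : 0 <= z -> 0 <= L -> (1 <= k)%nat -> L <= volley_exponent z L k.
Proof.
  intros Hz HL Hk. pose proof (INR_ge_1 k Hk). unfold volley_exponent.
  assert (0 <= z / INR k) by (apply Rdiv_le_0_compat; lra).
  assert (L <= (INR k + 1) / 2 * L)
    by (rewrite <- (Rmult_1_l L) at 1; apply Rmult_le_compat_r; lra).
  lra.
Qed.

Section Bomber.

Variables (v : R) (P K : R -> R -> R).
Hypotheses (Hv : 0 < v <= 1) (Hs : bomber_solution v P K).

Definition Q z w := 1 - P z w.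
Definition G z w := 1 - Hfun v P K z w.

Lemma Q_bounds z w : 0 <= z -> 0 <= w -> 0 <= Q z w <= 1.
Proof. intros Hz Hw. destruct Hs as [HP _]. specialize (HP z w Hz Hw). unfold Q. lra. Qed.

Lemma K_bounds z w : 0 <= z -> 0 <= w -> 0 <= K z w <= z.
Proof. intros Hz Hw. destruct Hs as [_ [HK _]]. apply (HK z w Hz Hw). Qed.

Lemma G_split z w : G z w = v * exp (- K z w) + a v (K z w) * Q (z - K z w) w.
Proof. unfold G, Hfun, Q, a. ring. Qed.

Lemma G_le_firing z w y : 0 <= z -> 0 <= w -> 0 <= y <= z ->
  G z w <= v * exp (- y) + Q (z - y) w.
Proof.
  intros Hz Hw Hy. destruct Hs as [_ [HK _]]. destruct (HK z w Hz Hw) as [_ Hopt].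
  specialize (Hopt y Hy).
  pose proof (Q_bounds (z - y) w ltac:(lra) Hw). pose proof (a_bounds v y Hv (proj1 Hy)).
  replace (v * exp (- y)) with (1 - a v y) by (unfold a; ring).
  unfold G, Q in *. nra.
Qed.

Lemma G_ge_split_terms z w : 0 <= z -> 0 <= w ->
  v * exp (- K z w) <= G z w /\ a v (K z w) * Q (z - K z w) w <= G z w.
Proof.
  intros Hz Hw. rewrite G_split. pose proof (K_bounds z w Hz Hw).
  pose proof (Q_bounds (z - K z w) w ltac:(lra) Hw). pose proof (a_bounds v (K z w) Hv ltac:(lra)).
  pose proof (exp_pos (- K z w)). split; nra.
Qed.

Lemma G_bounds z w : 0 <= z -> 0 <= w -> 0 < G z w <= 1.
Proof.
  intros Hz Hw. pose proof (K_bounds z w Hz Hw).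
  destruct Hs as [HP _]. specialize (HP (z - K z w) w ltac:(lra) Hw).
  pose proof (a_bounds v (K z w) Hv ltac:(lra)).
  assert (Ha : a v (K z w) < 1) by (pose proof (exp_pos (- K z w)); unfold a; nra).
  assert (0 <= a v (K z w) * P (z - K z w) w <= a v (K z w))
    by (split; [apply Rmult_le_pos | rewrite <- (Rmult_1_r (a _ _)) at 2;
                apply Rmult_le_compat_l]; lra).
  unfold G, Hfun. lra.
Qed.

Lemma Q_eq_RInt z w : 0 <= z -> 0 <= w ->
  ex_RInt (fun s => exp (- s) * G z (w - s)) 0 w /\
  Q z w = RInt (fun s => exp (- s) * G z (w - s)) 0 w.
Proof.
  intros Hz Hw. destruct Hs as [_ [_ Hint]]. destruct (Hint z w Hz Hw) as [Hex Heq].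
  assert (Hexp : ex_RInt (fun s => exp (- s)) 0 w) by (eexists; apply is_RInt_exp_opp).
  assert (Hdiff : forall s, exp (- s) * G z (w - s)
                  = minus (exp (- s)) (exp (- s) * Hfun v P K z (w - s)))
    by (intros s; unfold G, minus, plus, opp; simpl; ring).
  split.
  - eapply ex_RInt_ext; [| exact (ex_RInt_minus _ _ _ _ Hexp Hex)].
    intros s _. symmetry. apply Hdiff.
  - rewrite (RInt_ext _ _ _ _ (fun s _ => Hdiff s)).
    rewrite (RInt_minus (fun s => exp (- s)) (fun s => exp (- s) * Hfun v P K z (w - s)))
      by easy.
    rewrite (is_RInt_unique _ _ _ _ (is_RInt_exp_opp w)).
    unfold Q. rewrite Heq. unfold minus, plus, opp; simpl. ring.
Qed.

Lemma Q_at_0 z : 0 <= z -> Q z 0 = 0.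
Proof. intros Hz. destruct (Q_eq_RInt z 0 Hz (Rle_refl 0)) as [_ ->]. now rewrite RInt_point. Qed.

Lemma Q_le_time z w : 0 <= z -> 0 <= w -> Q z w <= w.
Proof.
  intros Hz Hw. destruct (Q_eq_RInt z w Hz Hw) as [Hex ->].
  rewrite <- (Rmult_1_r w) at 2. apply RInt_le_mul_const; [easy | easy |].
  intros s Hsw.
  assert (exp (- s) <= 1) by (rewrite <- exp_0; apply exp_le_exp; lra).
  pose proof (exp_pos (- s)). pose proof (G_bounds z (w - s) Hz ltac:(lra)). nra.
Qed.

Definition Q_lower m A := forall z w, 0 <= z -> 0 < w <= / 4 ->
  A * exp (- volley_exponent z (- ln w) m) <= Q z w.

Definition G_lower m B := forall z w, 0 <= z -> 0 < w <= / 4 ->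
  B * exp (- (volley_exponent z (- ln w) m + ln w)) <= G z w.

Lemma G_lower_1 : G_lower 1 v.
Proof.
  intros z w Hz Hw. destruct (G_ge_split_terms z w Hz ltac:(lra)) as [Hmiss _].
  replace (volley_exponent z (- ln w) 1 + ln w) with z by (unfold volley_exponent; simpl; field).
  pose proof (K_bounds z w Hz ltac:(lra)).
  assert (exp (- z) <= exp (- K z w)) by (apply exp_le_exp; lra).
  apply Rle_trans with (v * exp (- K z w)); [apply Rmult_le_compat_l; lra | easy].
Qed.

Lemma G_lower_S m A : (1 <= m)%nat -> 0 < A -> Q_lower m A -> G_lower (S m) (Rmin v (A / 2)).
Proof.
  intros Hm HA HQ z w Hz Hw.
  set (ystar := volley_exponent z (- ln w) (S m) + ln w).
  set (y := K z w).
  pose proof (K_bounds z w Hz ltac:(lra)) as Hy. fold y in Hy.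
  destruct (G_ge_split_terms z w Hz ltac:(lra)) as [Hmiss Hhit]. fold y in Hmiss, Hhit.
  assert (HB : 0 < Rmin v (A / 2)) by (apply Rmin_glb_lt; lra).
  pose proof (Rmin_l v (A / 2)). pose proof (Rmin_r v (A / 2)).
  pose proof (exp_pos (- ystar)).
  (* Either little is fired, and the current enemy alone destroys the bomber with probability
     at least [v e^(-y)], or much is fired and the remaining ammunition [z - y] is small. *)
  destruct (Rle_or_lt y ystar) as [Hlow | Hhigh].
  - assert (exp (- ystar) <= exp (- y)) by (apply exp_le_exp; lra).
    apply Rle_trans with (v * exp (- ystar)); [apply Rmult_le_compat_r|]; nra.
  - assert (Hrest : volley_exponent (z - y) (- ln w) m <= ystar).
    { rewrite (volley_exponent_after_firing z y (- ln w) m Hm).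
      pose proof (INR_ge_1 m Hm).
      assert ((ystar - y) / INR m < 0) by (apply Rdiv_neg_pos; lra).
      unfold ystar in *. lra. }
    assert (Hhalf : / 2 <= a v y).
    { apply (a_ge_half v y w Hv Hw).
      pose proof (neg_ln_pos w ltac:(lra)). pose proof (INR_ge_1 m Hm).
      assert (ystar = z / (INR m + 1) + INR m / 2 * - ln w)
        by (unfold ystar, volley_exponent; rewrite S_INR; field; lra).
      assert (0 <= z / (INR m + 1)) by (apply Rdiv_le_0_compat; lra).
      nra. }
    assert (HQy : A * exp (- ystar) <= Q (z - y) w).
    { apply Rle_trans with (A * exp (- volley_exponent (z - y) (- ln w) m)).
      - apply Rmult_le_compat_l; [lra|]. apply exp_le_exp; lra.
      - apply HQ; lra. }
    pose proof (Q_bounds (z - y) w ltac:(lra) ltac:(lra)).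
    apply Rle_trans with (A / 2 * exp (- ystar)); [apply Rmult_le_compat_r; lra|].
    apply Rle_trans with (a v y * Q (z - y) w); [nra | easy].
Qed.

Lemma Q_lower_of_G_lower m B : (1 <= m)%nat -> 0 < B -> G_lower m B ->
  exists A, 0 < A /\ Q_lower m A.
Proof.
  intros Hm HB HG.
  set (c := exp (- ((INR m - 1) / 2 * ln 2))).
  exists (B * exp (-1) * c / 2). split.
  { pose proof (exp_pos (-1)). pose proof (exp_pos (- ((INR m - 1) / 2 * ln 2))).
    unfold c. apply Rdiv_lt_0_compat; [|lra]. repeat apply Rmult_lt_0_compat; lra. }
  intros z w Hz Hw. set (L := - ln w).
  destruct (Q_eq_RInt z w Hz ltac:(lra)) as [Hex ->].
  set (V2 := volley_exponent z (L + ln 2) m - (L + ln 2)).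
  apply Rle_trans with (w / 2 * (exp (-1) * (B * exp (- V2)))).
  - right.
    assert (HV2 : V2 = volley_exponent z L m - L + (INR m - 1) / 2 * ln 2)
      by (pose proof (INR_ge_1 m Hm); unfold V2, volley_exponent; field; lra).
    replace w with (/ exp L) by (unfold L; rewrite exp_Ropp, exp_ln, Rinv_inv; lra).
    rewrite HV2. unfold c.
    replace (exp (- (volley_exponent z L m - L + (INR m - 1) / 2 * ln 2)))
      with (exp (- volley_exponent z L m) * exp L * exp (- ((INR m - 1) / 2 * ln 2)))
      by (rewrite <- !exp_plus; f_equal; ring).
    field. apply Rgt_not_eq, exp_pos.
  - apply RInt_ge_half_mul; [lra | easy | |].
    + intros s Hsw. pose proof (exp_pos (- s)). pose proof (G_bounds z (w - s) Hz ltac:(lra)). nra.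
    + intros s Hsw.
      assert (Hshift : - ln (w - s) <= L + ln 2).
      { assert (Hln : ln (w * / 2) <= ln (w - s)) by (apply ln_le; lra).
        rewrite ln_mult, ln_Rinv in Hln by lra. unfold L. lra. }
      assert (Hexp : exp (-1) <= exp (- s)) by (apply exp_le_exp; lra).
      assert (HGs : B * exp (- V2) <= G z (w - s)).
      { apply Rle_trans with (B * exp (- (volley_exponent z (- ln (w - s)) m + ln (w - s)))).
        - apply Rmult_le_compat_l; [lra|]. apply exp_le_exp.
          pose proof (volley_exponent_sub_le z _ _ m Hm Hshift). unfold V2. lra.
        - apply HG; lra. }
      pose proof (exp_pos (- V2)). pose proof (exp_pos (-1)).
      apply Rle_trans with (exp (-1) * G z (w - s)); [apply Rmult_le_compat_l; lra|].
      apply Rmult_le_compat_r; [|easy]. pose proof (G_bounds z (w - s) Hz ltac:(lra)). lra.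
Qed.

Lemma lower_bounds_exist m :
  (exists A, 0 < A /\ Q_lower (S m) A) /\ (exists B, 0 < B /\ G_lower (S m) B).
Proof.
  induction m as [| m [[A [HA HQ]] _]].
  - split; [apply (Q_lower_of_G_lower 1 v); [lia | lra |] | exists v; split; [lra |]];
      exact G_lower_1.
  - assert (HB : 0 < Rmin v (A / 2)) by (apply Rmin_glb_lt; lra).
    assert (HG := G_lower_S (S m) A ltac:(lia) HA HQ).
    split; [apply (Q_lower_of_G_lower (S (S m)) _ ltac:(lia) HB HG) |].
    exists (Rmin v (A / 2)). split; easy.
Qed.

Definition Q_upper m C := forall z w T, 0 <= z -> 0 < w < 1 ->
  (forall k, (1 <= k <= m)%nat -> T <= volley_exponent z (- ln w) k) ->
  Q z w <= C * (exp (- T) + w ^ S m).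

Lemma G_upper m C : 0 <= C -> Q_upper m C ->
  forall z w w' T, 0 <= z -> 0 < w < 1 -> 0 <= w' <= w -> - ln w <= T ->
  (forall k, (1 <= k <= S m)%nat -> T <= volley_exponent z (- ln w) k) ->
  G z w' <= (v + C) * (exp (- (T + ln w)) + w ^ S m).
Proof.
  intros HC HQ z w w' T Hz Hw Hw' HT Hk.
  set (y := T + ln w).
  assert (Hyz : y <= z).
  { specialize (Hk 1%nat ltac:(lia)). unfold volley_exponent in Hk. simpl INR in Hk.
    replace (z / 1 + (1 + 1) / 2 * - ln w) with (z - ln w) in Hk by field. unfold y. lra. }
  assert (Hg := G_le_firing z w' y Hz ltac:(lra) ltac:(unfold y in *; lra)).
  pose proof (exp_pos (- y)). assert (0 <= w ^ S m) by (apply pow_le; lra).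
  destruct (Rle_lt_or_eq_dec _ _ (proj1 Hw')) as [Hw'0 | <-].
  - assert (HQy : Q (z - y) w' <= C * (exp (- y) + w' ^ S m)).
    { apply HQ; [lra | lra |]. intros k Hk'.
      assert (Hstar : y <= volley_exponent (z - y) (- ln w) k).
      { rewrite (volley_exponent_after_firing z y (- ln w) k ltac:(lia)).
        specialize (Hk (S k) ltac:(lia)). pose proof (INR_ge_1 k ltac:(lia)).
        assert (0 <= (volley_exponent z (- ln w) (S k) - - ln w - y) / INR k)
          by (apply Rdiv_le_0_compat; unfold y; lra).
        unfold y in *. lra. }
      eapply Rle_trans; [exact Hstar|]. apply volley_exponent_le_L.
      apply Ropp_le_contravar, ln_le; lra. }
    assert (w' ^ S m <= w ^ S m) by (apply pow_incr; lra).
    fold y. nra.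
  - rewrite Q_at_0 in Hg by (unfold y in *; lra). fold y. nra.
Qed.

Lemma Q_upper_0 : Q_upper 0 1.
Proof.
  intros z w T Hz Hw _. pose proof (Q_le_time z w Hz ltac:(lra)).
  pose proof (exp_pos (- T)). simpl. lra.
Qed.

Lemma Q_upper_S m C : 0 <= C -> Q_upper m C -> Q_upper (S m) (v + C).
Proof.
  intros HC HQ z w T Hz Hw Hk.
  set (L := - ln w). assert (HL : 0 < L) by (apply neg_ln_pos; lra).
  (* Raising [T] to at least [L] keeps the amount [T' + ln w] fired in [G_upper] nonnegative. *)
  set (T' := Rmax T L).
  assert (HkT' : forall k, (1 <= k <= S m)%nat -> T' <= volley_exponent z L k)
    by (intros k Hk'; apply Rmax_lub;
        [now apply Hk | apply L_le_volley_exponent; [lra | lra | lia]]).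
  destruct (Q_eq_RInt z w Hz ltac:(lra)) as [Hex ->].
  eapply Rle_trans; [apply RInt_le_mul_const; [lra | exact Hex |] |].
  { intros s Hsw.
    assert (HG := G_upper m C HC HQ z w (w - s) T' Hz Hw ltac:(lra) (Rmax_r T L) HkT').
    pose proof (G_bounds z (w - s) Hz ltac:(lra)).
    assert (exp (- s) <= 1) by (rewrite <- exp_0; apply exp_le_exp; lra).
    pose proof (exp_pos (- s)).
    apply Rle_trans with (G z (w - s)); [nra | exact HG]. }
  assert (Hscale : w * exp (- (T' + ln w)) = exp (- T')).
  { replace (- (T' + ln w)) with (- T' + - ln w) by ring.
    rewrite exp_plus, (exp_Ropp (ln w)), exp_ln by lra. field. lra. }
  assert (exp (- T') <= exp (- T)) by (apply exp_le_exp; pose proof (Rmax_l T L); unfold T'; lra).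
  replace (w * ((v + C) * (exp (- (T' + ln w)) + w ^ S m)))
    with ((v + C) * (w * exp (- (T' + ln w)) + w ^ S (S m))) by (simpl; ring).
  rewrite Hscale. apply Rmult_le_compat_l; lra.
Qed.

Lemma Q_upper_exists m : exists C, 0 < C /\ Q_upper m C.
Proof.
  induction m as [| m [C [HC HQ]]].
  - exists 1. split; [lra | exact Q_upper_0].
  - exists (v + C). split; [lra | apply Q_upper_S; [lra | easy]].
Qed.

Lemma K_ge_abs_ln_G z w : 0 <= z -> 0 <= w -> ln v + Rabs (ln (G z w)) <= K z w.
Proof.
  intros Hz Hw. destruct (G_ge_split_terms z w Hz Hw) as [Hmiss _].
  rewrite abs_ln_of_le_1 by now apply G_bounds.
  enough (ln v - K z w <= ln (G z w)) by lra.
  apply le_ln_of_exp_le. unfold Rminus. now rewrite exp_plus, exp_ln by lra.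
Qed.

(* Once [G <= 1/2] the current encounter is survived with probability at least [1/2], so
   [Q (z - K) w <= 2 G], and the lower bound on [Q] keeps [z - K] from being small. *)
Lemma K_le_of_Q_lower m A z w : (1 <= m)%nat -> 0 < A -> Q_lower m A ->
  0 <= z -> 0 < w <= / 4 -> G z w <= / 2 ->
  K z w <= z + INR m * (ln 2 - ln A - Rabs (ln (G z w))) + INR m * (INR m + 1) / 2 * - ln w.
Proof.
  intros Hm HA HQ Hz Hw Hhalf.
  set (y := K z w). pose proof (K_bounds z w Hz ltac:(lra)) as Hy. fold y in Hy.
  destruct (G_ge_split_terms z w Hz ltac:(lra)) as [Hmiss Hhit]. fold y in Hmiss, Hhit.
  pose proof (G_bounds z w Hz ltac:(lra)) as HG.
  assert (Ha : / 2 <= a v y) by (unfold a; lra).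
  pose proof (Q_bounds (z - y) w ltac:(lra) ltac:(lra)).
  assert (HQ2 : A * exp (- volley_exponent (z - y) (- ln w) m) <= 2 * G z w).
  { apply Rle_trans with (Q (z - y) w); [apply HQ; lra | nra]. }
  assert (Hlog : ln A - volley_exponent (z - y) (- ln w) m <= ln 2 + ln (G z w)).
  { rewrite <- ln_mult by lra. apply le_ln_of_exp_le.
    unfold Rminus. now rewrite exp_plus, exp_ln. }
  rewrite abs_ln_of_le_1 by easy.
  pose proof (INR_ge_1 m Hm).
  assert (Hzy : INR m * (ln A - ln 2 - ln (G z w) - (INR m + 1) / 2 * - ln w) <= z - y).
  { replace (z - y) with (INR m * ((z - y) / INR m)) by (field; lra).
    apply Rmult_le_compat_l; [lra|]. unfold volley_exponent in Hlog. lra. }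
  lra.
Qed.

End Bomber.

(* The difference of the exponents for [k] and [j] volleys factors as
   [(k - j) * (rho / 2 - 1 / (j * k))], whose sign is controlled by the bracket on [rho]. *)
Lemma volley_exponent_min j rho : (1 <= j)%nat -> 2 / (INR (j + 1) * INR j) <= rho ->
  (j = 1%nat \/ rho < 2 / (INR j * INR (j - 1))) ->
  forall k, (1 <= k)%nat -> volley_exponent 1 rho j <= volley_exponent 1 rho k.
Proof.
  intros Hj Hlo Hhi k Hk.
  pose proof (INR_ge_1 j Hj) as HJ. pose proof (INR_ge_1 k Hk) as HK.
  enough (0 <= (INR k - INR j) * (rho / 2 - 1 / (INR j * INR k))).
  { enough (volley_exponent 1 rho k - volley_exponent 1 rho j
            = (INR k - INR j) * (rho / 2 - 1 / (INR j * INR k))) by lra.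
    unfold volley_exponent. field. lra. }
  destruct (Nat.lt_ge_cases k j) as [Hkj | Hjk].
  - destruct Hhi as [-> | Hhi]; [lia|].
    rewrite minus_INR in Hhi by lia. simpl INR in Hhi.
    assert (Hk1 : INR k + 1 <= INR j) by (rewrite <- S_INR; apply le_INR; lia).
    assert (1 / (INR j * (INR j - 1)) <= 1 / (INR j * INR k)).
    { unfold Rdiv. rewrite !Rmult_1_l.
      apply Rinv_le_contravar; [nra | apply Rmult_le_compat_l; lra]. }
    assert (rho / 2 < 1 / (INR j * (INR j - 1))).
    { replace (1 / (INR j * (INR j - 1))) with (2 / (INR j * (INR j - 1)) / 2) by (field; nra).
      lra. }
    nra.
  - assert (HJK : INR j <= INR k) by (apply le_INR; lia).
    destruct (Nat.eq_dec k j) as [-> | Hne]; [rewrite Rminus_diag, Rmult_0_l; lra|].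
    assert (Hk1 : INR j + 1 <= INR k) by (rewrite <- S_INR; apply le_INR; lia).
    rewrite plus_INR in Hlo. simpl INR in Hlo.
    assert (1 / (INR j * INR k) <= 1 / ((INR j + 1) * INR j)).
    { unfold Rdiv. rewrite !Rmult_1_l. apply Rinv_le_contravar; nra. }
    assert (1 / ((INR j + 1) * INR j) <= rho / 2).
    { replace (1 / ((INR j + 1) * INR j)) with (2 / ((INR j + 1) * INR j) / 2) by (field; nra).
      lra. }
    apply Rmult_le_pos; lra.
Qed.

Definition volley_lb rho j n x L :=
  x * (volley_exponent 1 rho j - (INR n + 2) / 2 * Rabs (L / x - rho)).

Lemma volley_lb_le rho j n x L k :
  (forall i, (1 <= i)%nat -> volley_exponent 1 rho j <= volley_exponent 1 rho i) ->
  0 < x -> (1 <= k <= S n)%nat -> volley_lb rho j n x L <= volley_exponent x L k.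
Proof.
  intros Hmin Hx Hk. rewrite volley_exponent_scale by lra. unfold volley_lb.
  apply Rmult_le_compat_l; [lra|].
  specialize (Hmin k ltac:(lia)).
  assert (HkN : INR k <= INR n + 1) by (rewrite <- S_INR; apply le_INR; lia).
  assert (Hdev : rho - L / x <= Rabs (L / x - rho)) by (rewrite Rabs_minus_sym; apply Rle_abs).
  pose proof (Rabs_pos (L / x - rho)). pose proof (pos_INR k).
  unfold volley_exponent in *.
  assert ((INR k + 1) / 2 * (rho - L / x) <= (INR n + 2) / 2 * Rabs (L / x - rho)).
  { apply Rle_trans with ((INR k + 1) / 2 * Rabs (L / x - rho)).
    - apply Rmult_le_compat_l; lra.
    - apply Rmult_le_compat_r; lra. }
  lra.
Qed.

Lemma volley_lb_le_pow rho j n x L : 0 < rho -> 2 * volley_exponent 1 rho j <= INR n * rho ->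
  0 < x -> Rabs (L / x - rho) <= rho / 2 -> volley_lb rho j n x L <= INR (S (S n)) * L.
Proof.
  intros Hrho Hn Hx Hdev. unfold volley_lb. rewrite !S_INR.
  replace L with (x * (L / x)) at 2 by (field; lra).
  assert (Hr : rho / 2 <= L / x) by (apply Rabs_le_between' in Hdev; lra).
  pose proof (Rabs_pos (L / x - rho)). pose proof (pos_INR n).
  assert (volley_exponent 1 rho j - (INR n + 2) / 2 * Rabs (L / x - rho)
          <= (INR n + 1 + 1) * (L / x)).
  { assert (0 <= (INR n + 2) / 2 * Rabs (L / x - rho)) by (apply Rmult_le_pos; lra).
    assert ((INR n + 1 + 1) * (rho / 2) <= (INR n + 1 + 1) * (L / x))
      by (apply Rmult_le_compat_l; lra).
    lra. }
  replace ((INR n + 1 + 1) * (x * (L / x))) with (x * ((INR n + 1 + 1) * (L / x))) by ring.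
  apply Rmult_le_compat_l; lra.
Qed.

Lemma volley_exponent_sub_pos rho j : 0 < rho -> (1 <= j)%nat -> 0 < volley_exponent 1 rho j - rho.
Proof.
  intros Hrho Hj. pose proof (INR_ge_1 j Hj). unfold volley_exponent.
  assert (0 < 1 / INR j) by (apply Rdiv_lt_0_compat; lra).
  assert (0 <= (INR j - 1) / 2 * rho) by (apply Rmult_le_pos; lra).
  replace (1 / INR j + (INR j + 1) / 2 * rho - rho) with (1 / INR j + (INR j - 1) / 2 * rho)
    by (field; lra). lra.
Qed.

Lemma lim_volley_exponent {T : Type} {F : (T -> Prop) -> Prop} {FF : Filter F} (r : T -> R) rho k :
  filterlim r F (locally rho) ->
  filterlim (fun t => volley_exponent 1 (r t) k) F (locally (volley_exponent 1 rho k)).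
Proof. intros Hr. apply lim_plus; [apply filterlim_const | now apply lim_scal]. Qed.

Section Asymptotics.

Variables (v : R) (P K : R -> R -> R) (xt : R -> R) (rho : R) (j : nat).
Hypotheses (Hv : 0 < v <= 1) (Hs : bomber_solution v P K) (Hrho : 0 < rho) (Hj : (1 <= j)%nat)
  (Hmin : forall k, (1 <= k)%nat -> volley_exponent 1 rho j <= volley_exponent 1 rho k)
  (Hx : filterlim xt (at_right 0) (Rbar_locally p_infty))
  (Hr : filterlim (fun t => - ln t / xt t) (at_right 0) (locally rho)).

Lemma abs_ln_Q_bounds n C A x t : 2 * volley_exponent 1 rho j <= INR n * rho ->
  0 < C -> Q_upper P (S n) C -> 0 < A -> Q_lower P j A ->
  0 < x -> 0 < t < / 4 -> Rabs (- ln t / x - rho) <= rho / 2 ->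
  volley_lb rho j n x (- ln t) - ln (2 * C) <= Rabs (ln (Q P x t))
  <= volley_exponent x (- ln t) j - ln A.
Proof.
  intros Hn HC HQup HA HQlo Hxpos Ht Hdev.
  set (T := volley_lb rho j n x (- ln t)).
  assert (Hup : Q P x t <= C * (exp (- T) + t ^ S (S n)))
    by (apply HQup; [lra | lra | intros k Hk; now apply volley_lb_le]).
  assert (Hpow : t ^ S (S n) <= exp (- T))
    by (apply pow_le_exp_opp; [lra | now apply volley_lb_le_pow]).
  assert (Hlo := HQlo x t ltac:(lra) ltac:(lra)).
  assert (0 < A * exp (- volley_exponent x (- ln t) j))
    by (apply Rmult_lt_0_compat; [easy | apply exp_pos]).
  pose proof (Q_bounds v P K Hs x t ltac:(lra) ltac:(lra)).
  assert (C * t ^ S (S n) <= C * exp (- T)) by (apply Rmult_le_compat_l; lra).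
  rewrite abs_ln_of_le_1 by lra.
  apply neg_ln_between; [easy | lra | split; [easy | lra]].
Qed.

Lemma abs_ln_G_bounds n C B x t : 2 * volley_exponent 1 rho j <= INR n * rho ->
  0 <= C -> Q_upper P n C -> 0 < B -> G_lower v P K j B ->
  0 < x -> 0 < t < / 4 -> Rabs (- ln t / x - rho) <= rho / 2 ->
  - ln t <= volley_lb rho j n x (- ln t) ->
  volley_lb rho j n x (- ln t) + ln t - ln (2 * (v + C)) <= Rabs (ln (G v P K x t))
  <= volley_exponent x (- ln t) j + ln t - ln B.
Proof.
  intros Hn HC HQup HB HGlo Hxpos Ht Hdev HLT.
  set (T := volley_lb rho j n x (- ln t)).
  assert (Hup := G_upper v P K Hv Hs n C HC HQup x t t T ltac:(lra) ltac:(lra) ltac:(lra) HLT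
                   (fun k Hk => volley_lb_le rho j n x (- ln t) k Hmin Hxpos Hk)).
  assert (Hpow : t ^ S n <= exp (- (T + ln t))).
  { apply pow_le_exp_opp; [lra|].
    pose proof (volley_lb_le_pow rho j n x (- ln t) Hrho Hn Hxpos Hdev) as Hpow.
    rewrite (S_INR (S n)) in Hpow. fold T in Hpow. lra. }
  assert (Hlo := HGlo x t ltac:(lra) ltac:(lra)).
  assert ((v + C) * t ^ S n <= (v + C) * exp (- (T + ln t))) by (apply Rmult_le_compat_l; lra).
  rewrite abs_ln_of_le_1 by (apply (G_bounds v P K Hv Hs x t); lra).
  apply neg_ln_between; [easy | lra | split; [easy | lra]].
Qed.

Lemma lim_deviation : filterlim (fun t => Rabs (- ln t / xt t - rho)) (at_right 0) (locally 0).
Proof.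
  apply lim_abs_0.
  pose proof (lim_plus _ _ _ _ Hr (filterlim_const (- rho))) as Hdiff.
  rewrite Rplus_opp_r in Hdiff. exact Hdiff.
Qed.

Lemma eventually_regular delta : 0 < delta ->
  at_right 0 (fun t => 0 < t < / 4 /\ 0 < xt t /\ Rabs (- ln t / xt t - rho) <= delta).
Proof.
  intros Hd. apply filter_and; [apply at_right_0_lt; lra |].
  apply filter_and; [now apply eventually_pos_of_p_infty |].
  eapply filter_imp; [| exact (lim_eventually_lt _ _ delta lim_deviation Hd)]. intros t Ht; lra.
Qed.

Lemma lim_abs_ln_Q :
  filterlim (fun t => Rabs (ln (Q P (xt t) t)) / xt t) (at_right 0)
    (locally (volley_exponent 1 rho j)).
Proof.
  (* [n] is so large that the term [t ^ (n + 2)] of [Q_upper] is negligible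
     ([volley_lb_le_pow]). *)
  destruct (exists_nat_mul_ge (2 * volley_exponent 1 rho j) rho Hrho) as [n Hn].
  destruct (Q_upper_exists v P K Hv Hs (S n)) as [C [HC HQup]].
  destruct (lower_bounds_exist v P K Hv Hs (j - 1)) as [[A [HA HQlo]] _].
  replace (S (j - 1)) with j in HQlo by lia.
  set (f := volley_exponent 1 rho j).
  apply (ratio_squeeze (fun t => Rabs (ln (Q P (xt t) t))) xt
           (fun t => f + - ((INR n + 2) / 2) * Rabs (- ln t / xt t - rho))
           (fun t => volley_exponent 1 (- ln t / xt t) j) (ln (2 * C)) (- ln A) f Hx).
  - pose proof (lim_plus _ _ _ _ (filterlim_const f)
                  (lim_scal (- ((INR n + 2) / 2)) _ _ lim_deviation)) as Hu.
    rewrite Rmult_0_r, Rplus_0_r in Hu. exact Hu.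
  - now apply lim_volley_exponent.
  - eapply filter_imp; [| exact (eventually_regular (rho / 2) ltac:(lra))].
    intros t [Ht [Hxt Hdev]].
    pose proof (abs_ln_Q_bounds n C A (xt t) t Hn HC HQup HA HQlo Hxt Ht Hdev) as Hb.
    rewrite volley_exponent_scale in Hb by lra. unfold volley_lb in Hb. fold f in Hb. lra.
Qed.

Lemma lim_abs_ln_G :
  filterlim (fun t => Rabs (ln (G v P K (xt t) t)) / xt t) (at_right 0)
    (locally (volley_exponent 1 rho j - rho)).
Proof.
  destruct (exists_nat_mul_ge (2 * volley_exponent 1 rho j) rho Hrho) as [n Hn].
  destruct (Q_upper_exists v P K Hv Hs n) as [C [HC HQup]].
  destruct (lower_bounds_exist v P K Hv Hs (j - 1)) as [_ [B [HB HGlo]]].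
  replace (S (j - 1)) with j in HGlo by lia.
  set (f := volley_exponent 1 rho j).
  set (u1 := fun t => f + - ((INR n + 2) / 2) * Rabs (- ln t / xt t - rho) + -1 * (- ln t / xt t)).
  assert (Hu1 : filterlim u1 (at_right 0) (locally (f - rho))).
  { pose proof (lim_plus _ _ _ _ (lim_plus _ _ _ _ (filterlim_const f)
                  (lim_scal (- ((INR n + 2) / 2)) _ _ lim_deviation)) (lim_scal (-1) _ _ Hr)) as Hu.
    replace (f + - ((INR n + 2) / 2) * 0 + -1 * rho) with (f - rho) in Hu by ring. exact Hu. }
  apply (ratio_squeeze (fun t => Rabs (ln (G v P K (xt t) t))) xt u1
           (fun t => volley_exponent 1 (- ln t / xt t) j + -1 * (- ln t / xt t))
           (ln (2 * (v + C))) (- ln B) (f - rho) Hx Hu1).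
  - pose proof (lim_plus _ _ _ _ (lim_volley_exponent _ _ j Hr) (lim_scal (-1) _ _ Hr)) as Hu2.
    replace (volley_exponent 1 rho j + -1 * rho) with (f - rho) in Hu2 by (unfold f; ring).
    exact Hu2.
  - pose proof (lim_eventually_gt _ _ 0 Hu1 (volley_exponent_sub_pos rho j Hrho Hj)) as Hpos.
    assert (Hreg := eventually_regular (rho / 2) ltac:(lra)).
    assert (Hev := filter_and _ _ Hreg Hpos).
    eapply filter_imp; [| exact Hev].
    intros t [[Ht [Hxt Hdev]] Hu1t].
    assert (Hprod : 0 <= xt t * u1 t) by (apply Rmult_le_pos; lra).
    unfold u1 in Hprod |- *. cbv beta in Hprod |- *.
    assert (HL : - ln t = xt t * (- ln t / xt t)) by (field; lra).
    assert (HLT : - ln t <= volley_lb rho j n (xt t) (- ln t)) by (unfold volley_lb; fold f; lra).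
    pose proof (abs_ln_G_bounds n C B (xt t) t Hn ltac:(lra) HQup HB HGlo Hxt Ht Hdev HLT) as Hb.
    rewrite volley_exponent_scale in Hb by lra. unfold volley_lb in Hb. fold f in Hb. lra.
Qed.

Lemma K_over_x_ge : at_right 0 (fun t =>
  ln v * / xt t + Rabs (ln (G v P K (xt t) t)) / xt t <= K (xt t) t / xt t).
Proof.
  eapply filter_imp; [| exact (eventually_regular 1 ltac:(lra))]. intros t [Ht [Hxt _]].
  replace (ln v * / xt t + Rabs (ln (G v P K (xt t) t)) / xt t)
    with ((ln v + Rabs (ln (G v P K (xt t) t))) / xt t) by (field; lra).
  apply Rmult_le_compat_r; [left; now apply Rinv_0_lt_compat |].
  apply (K_ge_abs_ln_G v P K Hv Hs); lra.
Qed.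

Lemma K_over_x_le_1 : at_right 0 (fun t => K (xt t) t / xt t <= 1).
Proof.
  eapply filter_imp; [| exact (eventually_regular 1 ltac:(lra))]. intros t [Ht [Hxt _]].
  pose proof (K_bounds v P K Hs (xt t) t ltac:(lra) ltac:(lra)).
  apply Rmult_le_reg_r with (xt t); [easy|]. unfold Rdiv. rewrite Rmult_assoc, Rinv_l; lra.
Qed.

Lemma K_over_x_le m A : j = S m -> (1 <= m)%nat -> 0 < A -> Q_lower P m A ->
  at_right 0 (fun t => K (xt t) t / xt t <=
    1 + INR m * (ln 2 - ln A) * / xt t + - INR m * (Rabs (ln (G v P K (xt t) t)) / xt t)
    + INR m * (INR m + 1) / 2 * (- ln t / xt t)).
Proof.
  intros Hjm Hm HA HQ.
  assert (Hbig := eventually_ge_of_ratio _ _ _ (ln 2) Hx lim_abs_ln_G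
                    (volley_exponent_sub_pos rho j Hrho Hj)).
  assert (Hreg := eventually_regular 1 ltac:(lra)).
  eapply filter_imp; [| exact (filter_and _ _ Hreg Hbig)]. intros t [[Ht [Hxt _]] Hln2].
  pose proof (G_bounds v P K Hv Hs (xt t) t ltac:(lra) ltac:(lra)) as HG.
  assert (Hhalf : G v P K (xt t) t <= / 2).
  { rewrite abs_ln_of_le_1 in Hln2 by easy.
    rewrite <- (exp_ln (G v P K (xt t) t)), <- (exp_ln (/ 2)) by lra.
    apply exp_le_exp. rewrite ln_Rinv by lra. lra. }
  pose proof (K_le_of_Q_lower v P K Hv Hs m A (xt t) t Hm HA HQ ltac:(lra) ltac:(lra) Hhalf) as Hk.
  replace (1 + INR m * (ln 2 - ln A) * / xt t + - INR m * (Rabs (ln (G v P K (xt t) t)) / xt t)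
           + INR m * (INR m + 1) / 2 * (- ln t / xt t))
    with ((xt t + INR m * (ln 2 - ln A - Rabs (ln (G v P K (xt t) t)))
           + INR m * (INR m + 1) / 2 * - ln t) / xt t) by (field; lra).
  apply Rmult_le_compat_r; [left; now apply Rinv_0_lt_compat | exact Hk].
Qed.

Lemma lim_K : filterlim (fun t => K (xt t) t / xt t) (at_right 0)
  (locally (volley_exponent 1 rho j - rho)).
Proof.
  pose proof (lim_plus _ _ _ _ (lim_scal (ln v) _ _ (lim_inv_p_infty xt Hx)) lim_abs_ln_G) as Hlo.
  rewrite Rmult_0_r, Rplus_0_l in Hlo.
  set (lower := fun t => ln v * / xt t + Rabs (ln (G v P K (xt t) t)) / xt t).
  set (ratio := fun t => K (xt t) t / xt t).
  destruct (Nat.eq_dec j 1) as [Hj1 | Hj1].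
  - apply (filterlim_le_le lower ratio (fun _ => 1) (Finite (volley_exponent 1 rho j - rho))
             (filter_and _ _ K_over_x_ge K_over_x_le_1) Hlo).
    replace (volley_exponent 1 rho j - rho) with 1
      by (rewrite Hj1; unfold volley_exponent; simpl; field).
    apply filterlim_const.
  - destruct (lower_bounds_exist v P K Hv Hs (j - 2)) as [[A [HA HQ]] _].
    set (m := S (j - 2)) in HQ. assert (Hjm : j = S m) by (unfold m; lia).
    assert (Hle := K_over_x_le m A Hjm ltac:(unfold m; lia) HA HQ).
    apply (filterlim_le_le lower ratio _ (Finite (volley_exponent 1 rho j - rho))
             (filter_and _ _ K_over_x_ge Hle) Hlo).
    pose proof (lim_plus _ _ _ _ (lim_plus _ _ _ _ (lim_plus _ _ _ _ (filterlim_const 1)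
                  (lim_scal (INR m * (ln 2 - ln A)) _ _ (lim_inv_p_infty xt Hx)))
                  (lim_scal (- INR m) _ _ lim_abs_ln_G))
                  (lim_scal (INR m * (INR m + 1) / 2) _ _ Hr)) as Hup.
    replace (1 + INR m * (ln 2 - ln A) * 0 + - INR m * (volley_exponent 1 rho j - rho)
             + INR m * (INR m + 1) / 2 * rho) with (volley_exponent 1 rho j - rho) in Hup.
    + exact Hup.
    + rewrite Hjm. unfold volley_exponent. rewrite S_INR. pose proof (pos_INR m). field. lra.
Qed.

End Asymptotics.

Theorem theorem2 (v : R) (P K : R -> R -> R) (xt : R -> R) (rho : R) (j : nat) :
  0 < v <= 1 ->
  bomber_solution v P K ->
  (exists t0, 0 < t0 /\ forall t, 0 < t < t0 -> 0 < xt t) ->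
  0 < rho ->
  filterlim (fun t => Rabs (ln t) / xt t) (at_right 0) (locally rho) ->
  (1 <= j)%nat ->
  2 / (INR (j + 1) * INR j) <= rho ->
  (j = 1%nat \/ rho < 2 / (INR j * INR (j - 1))) ->
  filterlim (fun t => K (xt t) t / xt t) (at_right 0)
    (locally (1 / INR j + rho * (INR j - 1) / 2)) /\
  filterlim (fun t => Rabs (ln (1 - Hfun v P K (xt t) t)) / xt t) (at_right 0)
    (locally (1 / INR j + rho * (INR j - 1) / 2)) /\
  filterlim (fun t => Rabs (ln (1 - P (xt t) t)) / xt t) (at_right 0)
    (locally (1 / INR j + rho * (INR j + 1) / 2)).
Proof.
  intros Hv Hs [t0 [Ht0 Hxpos]] Hrho Hratio Hj Hlo Hhi.
  pose proof (volley_exponent_min j rho Hj Hlo Hhi) as Hmin.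
  assert (Hr : filterlim (fun t => - ln t / xt t) (at_right 0) (locally rho)).
  { apply (filterlim_ext_loc (fun t => Rabs (ln t) / xt t)); [| exact Hratio].
    eapply filter_imp; [| exact (at_right_0_lt 1 Rlt_0_1)]. intros t Ht.
    rewrite abs_ln_of_le_1 by lra. reflexivity. }
  assert (Hpos : at_right 0 (fun t => 0 < xt t))
    by (eapply filter_imp; [| exact (at_right_0_lt t0 Ht0)]; exact Hxpos).
  pose proof (p_infty_of_ratio _ xt rho lim_neg_ln_0 Hr Hrho Hpos) as Hx.
  pose proof (INR_ge_1 j Hj).
  replace (1 / INR j + rho * (INR j - 1) / 2) with (volley_exponent 1 rho j - rho)
    by (unfold volley_exponent; field; lra).
  replace (1 / INR j + rho * (INR j + 1) / 2) with (volley_exponent 1 rho j)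
    by (unfold volley_exponent; field; lra).
  split; [| split].
  - exact (lim_K v P K xt rho j Hv Hs Hrho Hj Hmin Hx Hr).
  - exact (lim_abs_ln_G v P K xt rho j Hv Hs Hrho Hj Hmin Hx Hr).
  - exact (lim_abs_ln_Q v P K xt rho j Hv Hs Hrho Hj Hmin Hx Hr).
Qed.
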